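(* Let $G$ be a graph on $n$ vertices and let $k$ be an integer with $2\leq k\leq n$. If $\psi_k(G)=n-k+1$, then $G$ is connected.
   Context: All graphs are finite, simple and nonempty. For a graph $G$ and a positive integer $k$, a $k$-path vertex cover ($k$-PVC) of $G$ is a set $S$ of vertices such that every path on $k$ vertices in $G$ contains at least one vertex of $S$ (if $G$ has no path on $k$ vertices, the empty set is a $k$-PVC). $\psi_k(G)$ denotes the minimum cardinality of a $k$-PVC of $G$. *)

From mathcomp Require Import all_boot.
Set Implicit Arguments. Unset Strict Implicit. Unset Printing Implicit Defensive.

Definition simple_graph (T : finType) (e : rel T) : Prop :=
  symmetric e /\ irreflexive e.

Definition is_kpath (T : finType) (e : rel T) (k : nat) (p : k.-tuple T) : bool :=
  uniq p && sorted e p.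

Definition is_kPVC (T : finType) (e : rel T) (k : nat) (S : {set T}) : bool :=
  [forall p : k.-tuple T, is_kpath e p ==> [exists v in S, v \in p]].

(* psi_k(G): minimum cardinality of a k-PVC (setT is always one for k >= 1;
   the default #|T| is only the neutral element of minn). *)
Definition psi (T : finType) (e : rel T) (k : nat) : nat :=
  \big[minn/#|T|]_(S : {set T} | is_kPVC e k S) #|S|.

Definition connected_graph (T : finType) (e : rel T) : Prop :=
  forall x y : T, connect e x y.

(* If two vertices x, y lie in different components, extend {x, y} to a set W
   of exactly k vertices.  A k-path avoiding ~: W would have W as its vertex
   set, hence would join x to y; so ~: W is a k-PVC of size n - k. *)

From HB Require Import structures.
From mathcomp Require Import all_boot.

HB.instance Definition _ := SemiGroup.isComLaw.Build nat minn minnA minnC.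

Lemma psi_le_kPVC {T : finType} {e : rel T} {k : nat} {S : {set T}} :
  is_kPVC e k S -> psi e k <= #|S|.
Proof. by move=> coverS; rewrite /psi (bigD1 S) //= geq_minl. Qed.

Lemma exists_superset_card {T : finType} (A : {set T}) (m : nat) :
  #|A| <= m <= #|T| -> exists2 B : {set T}, A \subset B & #|B| = m.
Proof.
elim: m => [|m IHm] /andP [Am mT].
  by exists A; last by apply/eqP; rewrite -leqn0.
have [cardA|Alt] := eqVneq #|A| m.+1; first by exists A.
have [B AB Bm] : exists2 B : {set T}, A \subset B & #|B| = m.
  by apply: IHm; rewrite -ltnS ltn_neqAle Alt Am ltnW.
have [z] : exists z, z \in ~: B.
  by apply/set0Pn; rewrite -card_gt0 cardsCs setCK Bm subn_gt0.
rewrite inE => zB; exists (z |: B); first exact: subset_trans AB (subsetUr _ _).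
by rewrite cardsU1 zB Bm.
Qed.

Lemma sorted_connect {T : finType} {e : rel T} {s : seq T} {x y : T} :
  symmetric e -> sorted e s -> x \in s -> y \in s -> connect e x y.
Proof.
move=> /sym_connect_sym connect_symmetric; case: s => [//|h t] /= ht xs ys.
have connect_h := path_connect ht.
by apply: (connect_trans (y := h)); [rewrite connect_symmetric|]; apply: connect_h.
Qed.

Lemma kpath_vertices_eq {T : finType} {e : rel T} {k : nat} {p : k.-tuple T}
    {W : {set T}} :
  is_kpath e p -> #|W| = k -> {subset p <= W} -> W = [set v in p].
Proof.
move=> /andP [uniq_p _] cardW pW; apply/esym/eqP.
rewrite eqEcard cardW -[X in X <= _](size_tuple p) -(card_uniqP uniq_p).
rewrite (eq_card (in_set (mem p))) leqnn andbT.
by apply/subsetP=> v; rewrite inE; apply: pW.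
Qed.

Lemma setC_kPVC_of_disconnected {T : finType} {e : rel T} {k : nat}
    {W : {set T}} {x y : T} :
  symmetric e -> #|W| = k -> x \in W -> y \in W -> ~~ connect e x y ->
  is_kPVC e k (~: W).
Proof.
move=> sym_e cardW xW yW nxy; apply/forallP=> p; apply/implyP=> pathp.
apply: contraT; rewrite negb_exists => /forallP avoid.
have pW : {subset p <= W}.
  by move=> v vp; have := avoid v; rewrite inE vp andbT negbK.
have EW := kpath_vertices_eq pathp cardW pW.
move: xW yW; rewrite EW !inE => xp yp.
by rewrite (sorted_connect sym_e (andP pathp).2 xp yp) in nxy.
Qed.

Theorem mainTheorem9 (T : finType) (e : rel T) (k : nat) :
  simple_graph e -> 0 < #|T| -> 2 <= k <= #|T| ->
  psi e k = #|T| - k + 1 ->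
  connected_graph e.
Proof.
move=> [sym_e _] _ /andP [k_ge2 k_leT] psi_eq x y.
have [-> |neq_xy] := eqVneq x y; first exact: connect0.
apply/negPn/negP=> nxy.
have [W xyW cardW] : exists2 W : {set T}, [set x; y] \subset W & #|W| = k.
  by apply: exists_superset_card; rewrite cards2 neq_xy k_ge2.
have xW : x \in W by apply: (subsetP xyW); rewrite !inE eqxx.
have yW : y \in W by apply: (subsetP xyW); rewrite !inE eqxx orbT.
have := psi_le_kPVC (setC_kPVC_of_disconnected sym_e cardW xW yW nxy).
by rewrite psi_eq cardsCs setCK cardW addn1 ltnn.
Qed.
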